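(* Let $G$ be a graph and let $G_{(2)}$ be the graph obtained from $G$ by subdividing each edge an even number of times, i.e. each edge $uv$ of $G$ is replaced by an induced path between $u$ and $v$ having an even number of internal (new) vertices, these paths being internally vertex-disjoint. Then $G$ is $1$-extendable if and only if $G_{(2)}$ is $1$-extendable.
   Context: All graphs are finite, simple and undirected. A graph is $1$-extendable if every vertex belongs to some maximum independent set (an independent set of maximum size) of the graph. *)

(* Simple graphs as symmetric irreflexive relations on a finType. *)
From mathcomp Require Import all_boot.
Set Implicit Arguments. Unset Strict Implicit. Unset Printing Implicit Defensive.

Section Indep.
Variables (V : finType) (r : rel V).

Definition independent (S : {set V}) : bool :=
  [forall x in S, forall y in S, ~~ r x y].

Definition alpha : nat := \max_(S : {set V} | independent S) #|S|.

Definition max_indep (S : {set V}) : bool := independent S && (#|S| == alpha).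

Definition one_extendable : Prop :=
  forall v : V, exists S : {set V}, max_indep S /\ v \in S.
End Indep.

Section Subdivision.
Variables (T : finType) (e : rel T).

Definition edge_set : {set {set T}} :=
  [set s : {set T} | [exists x, exists y, (s == [set x; y]) && e x y]].

(* m s = half the number of subdivision vertices put on edge s *)
Variable m : {set T} -> nat.

Definition sd_bound : nat := \max_(s : {set T}) (2 * m s).

Definition sd_internal :=
  {p : {set T} * 'I_sd_bound | (p.1 \in edge_set) && (val p.2 < 2 * m p.1)}.

Definition sd_vertex := (T + sd_internal)%type.

Definition low_end (s : {set T}) (x : T) : bool :=
  (x \in s) && [forall y in s, enum_rank x <= enum_rank y].
Definition high_end (s : {set T}) (x : T) : bool :=
  (x \in s) && [forall y in s, enum_rank y <= enum_rank x].

(* x is adjacent to the internal vertex (s, i): the path for edge s is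
   low_end - (s,0) - (s,1) - ... - (s, 2 m s - 1) - high_end *)
Definition sd_attach (x : T) (p : sd_internal) : bool :=
  let s := (val p).1 in let i := val (val p).2 in
  ((i == 0) && low_end s x) || ((i == (2 * m s).-1) && high_end s x).

Definition sd_rel : rel sd_vertex := fun a b =>
  match a, b with
  | inl x, inl y => e x y && (m [set x; y] == 0)
  | inl x, inr p => sd_attach x p
  | inr p, inl x => sd_attach x p
  | inr p, inr q =>
      ((val p).1 == (val q).1) &&
      (((val (val p).2).+1 == val (val q).2) || ((val (val q).2).+1 == val (val p).2))
  end.
End Subdivision.
Arguments sd_rel {T} e m.
Arguments sd_vertex {T} e m.

From mathcomp Require Import all_boot zify.
Set Implicit Arguments. Unset Strict Implicit. Unset Printing Implicit Defensive.

(* Write M for half the number of subdivision vertices. An independent set S of G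
   lifts to one of G_(2) of size |S| + M: on each path take every other internal
   vertex, with the parity chosen so that the neighbour of an end in S is skipped.
   Conversely, an independent set S' of G_(2) meets the path of an edge s in at most
   m s vertices, and in at most m s - 1 when both ends of s lie in S'; deleting one
   end of each such edge, never a prescribed vertex x, leaves an independent set of G
   of size at least |S'| - M.  Hence alpha(G_(2)) = alpha(G) + M: lifts of maximum
   independent sets are maximum and cover every vertex of G_(2), and projecting a
   maximum independent set of G_(2) through x gives one of G through x. *)

Lemma card_set_sum (A B : finType) (X : {set A + B}) :
  #|X| = #|[set a | inl a \in X]| + #|[set b | inr b \in X]|.
Proof.
by rewrite -!sum1_card big_sumType; congr (_ + _); apply: eq_bigl => ?; rewrite inE.
Qed.

Section Independence.
Variables (V : finType) (r : rel V).

Lemma independentP (S : {set V}) :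
  reflect {in S &, forall x y, ~~ r x y} (independent r S).
Proof.
apply: (iffP forall_inP) => [indS x y /indS /forall_inP|indS x xS]; first exact.
by apply/forall_inP => y; apply: indS.
Qed.

Lemma independent_set0 : independent r set0.
Proof. by apply/independentP => x; rewrite inE. Qed.

Lemma independent_set1 x : ~~ r x x -> independent r [set x].
Proof. by move=> rxx; apply/independentP => y z /set1P-> /set1P->. Qed.

Lemma leq_card_alpha (S : {set V}) : independent r S -> #|S| <= alpha r.
Proof. by move=> indS; apply: (@leq_bigmax_cond _ (independent r)). Qed.

Lemma max_indep_exists : exists S, max_indep r S.
Proof.
have : 0 < #|[pred S : {set V} | independent r S]|.
  by apply/card_gt0P; exists set0; rewrite inE independent_set0.
move=> /(eq_bigmax_cond (fun S : {set V} => #|S|)) [S]; rewrite inE => indS cardS.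
by exists S; rewrite /max_indep indS -cardS; apply/eqP.
Qed.

Lemma max_indep_of_alpha_le (S : {set V}) :
  independent r S -> alpha r <= #|S| -> max_indep r S.
Proof. by move=> indS leS; rewrite /max_indep indS eqn_leq leS leq_card_alpha. Qed.

Lemma hitting_set_avoiding (B : {set {set V}}) (X : {set V}) :
  {in B, forall s : {set V}, ~~ (s \subset X)} ->
  exists R : {set V}, [/\ #|R| <= #|B|, R \subset ~: X
                        & {in B, forall s : {set V}, exists2 y, y \in s & y \in R}].
Proof.
move=> notsubX; have [->|[s0 /notsubX /subsetPn[y0 _ _]]] := set_0Vmem B.
  by exists set0; split=> [||s]; rewrite ?cards0 ?sub0set ?inE.
pose c s := odflt y0 [pick y in s :\: X].
have cP : {in B, forall s : {set V}, c s \in s :\: X}.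
  move=> s /notsubX /subsetPn[y ys yX]; rewrite /c; case: pickP => [//|none].
  by have := none y; rewrite inE ys yX.
exists (c @: B); split=> [||s sB]; first exact: leq_imset_card.
  apply/subsetP => _ /imsetP[s sB ->].
  by have := cP s sB; rewrite !inE => /andP[].
by exists (c s); [have := cP s sB; rewrite inE => /andP[] | exact: imset_f].
Qed.

End Independence.

Section Subdivision.
Variables (T : finType) (e : rel T).
Hypothesis e_sym : symmetric e.
Variable m : {set T} -> nat.

Local Notation G2 := (sd_rel e m).
Definition edge_of (p : sd_internal e m) : {set T} := (val p).1.
Definition index_of (p : sd_internal e m) : nat := val (val p).2.

Lemma sd_internalP (p : sd_internal e m) :
  edge_of p \in edge_set e /\ index_of p < 2 * m (edge_of p).
Proof. exact/andP/(valP p). Qed.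

Lemma sd_attachE x p : sd_attach x p =
  ((index_of p == 0) && low_end (edge_of p) x)
  || ((index_of p == (2 * m (edge_of p)).-1) && high_end (edge_of p) x).
Proof. by []. Qed.

Lemma sd_rel_internal (p q : sd_internal e m) :
  G2 (inr p) (inr q) =
  (edge_of p == edge_of q)
  && (((index_of p).+1 == index_of q) || ((index_of q).+1 == index_of p)).
Proof. by []. Qed.

Lemma sd_internal_inj (p q : sd_internal e m) :
  edge_of p = edge_of q -> index_of p = index_of q -> p = q.
Proof.
case: p q => [[s i] ?] [[t j] ?]; rewrite /edge_of /index_of /= => es /ord_inj ei.
by apply: val_inj; rewrite /= es ei.
Qed.

Lemma edge_set2 x y : e x y -> [set x; y] \in edge_set e.
Proof.
move=> exy; rewrite inE; apply/existsP; exists x.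
by apply/existsP; exists y; rewrite eqxx.
Qed.

Lemma edge_setP s : s \in edge_set e ->
  exists u v, [/\ s = [set u; v], e u v, low_end s u & high_end s v].
Proof.
rewrite inE => /existsP[a /existsP[b /andP[/eqP-> eab]]].
wlog le_ab : a b eab / enum_rank a <= enum_rank b.
  move=> oriented; case: (leqP (enum_rank a) (enum_rank b)) => [|/ltnW].
    exact: oriented.
  by rewrite setUC; apply: oriented; rewrite // e_sym.
exists a, b; split; rewrite // /low_end /high_end !inE eqxx ?orbT /=.
  by apply/forall_inP => y /set2P[]->.
by apply/forall_inP => y /set2P[]->.
Qed.

Lemma low_end_inj (s : {set T}) x y : low_end s x -> low_end s y -> x = y.
Proof.
move=> /andP[xs /forall_inP lx] /andP[ys /forall_inP ly].
by apply/enum_rank_inj/val_inj/eqP; rewrite eqn_leq lx // ly.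
Qed.

Lemma high_end_inj (s : {set T}) x y : high_end s x -> high_end s y -> x = y.
Proof.
move=> /andP[xs /forall_inP hx] /andP[ys /forall_inP hy].
by apply/enum_rank_inj/val_inj/eqP; rewrite eqn_leq hx // hy.
Qed.

Lemma low_high_edge (s : {set T}) u v :
  s \in edge_set e -> low_end s u -> high_end s v -> e u v.
Proof.
move=> /edge_setP[a [b [_ eab la hb]]] lu hv.
by rewrite (low_end_inj lu la) (high_end_inj hv hb).
Qed.

Lemma leq_sd_bound (s : {set T}) : 2 * m s <= sd_bound m.
Proof. exact: (@leq_bigmax _ (fun s => 2 * m s)). Qed.

(* A slot (s, a) with a < m s stands for the pair of positions 2a, 2a+1 on the path
   subdividing s, so there are as many slots as half the number of new vertices.
   The index type has the form 'I_n.+1 only so that inord can be used. *)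
Local Notation slot := ({set T} * 'I_(sd_bound m).+1)%type.

Definition slots : {set slot} := [set w : slot | (w.1 \in edge_set e) && (w.2 < m w.1)].

Definition slot_of (b : bool) (p : sd_internal e m) : slot :=
  (edge_of p, inord (index_of p + b)./2).

Lemma val_slot_of (b : bool) (p : sd_internal e m) :
  (slot_of b p).2 = (index_of p + b)./2 :> nat.
Proof.
have [_ ip] := sd_internalP p; have bound := leq_sd_bound (edge_of p).
by rewrite inordK //; lia.
Qed.

Lemma slot_of_in (b : bool) (p : sd_internal e m) :
  index_of p + b < 2 * m (edge_of p) -> slot_of b p \in slots.
Proof.
have [ps _] := sd_internalP p.
by move=> ipb; rewrite inE ps val_slot_of -[(slot_of b p).1]/(edge_of p); lia.
Qed.

(* Either parity class gives m s vertices on the path of s; taking the odd one exactly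
   when the low end of s is in S keeps them away from S. *)
Definition lift (S : {set T}) : {set sd_vertex e m} :=
  [set v | match v with
           | inl x => x \in S
           | inr p => odd (index_of p) == [exists y in S, low_end (edge_of p) y]
           end].

Lemma lift_independent (S : {set T}) : independent e S -> independent G2 (lift S).
Proof.
move=> /independentP indS; apply/independentP.
have attach x p : inl x \in lift S -> inr p \in lift S -> ~~ sd_attach x p.
  have [ps ip] := sd_internalP p.
  rewrite !inE sd_attachE => xS /eqP odd_p.
  apply/norP; split; apply/negP => /andP[/eqP i_p endx].
    have : [exists y in S, low_end (edge_of p) y] by apply/exists_inP; exists x.
    by rewrite -odd_p i_p.
  have /exists_inP[y yS ly] : [exists y in S, low_end (edge_of p) y].
    by rewrite -odd_p i_p; lia.
  by have := indS y x yS xS; rewrite (low_high_edge ps ly endx).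
move=> [x|p] [y|q] vS wS.
- by rewrite !inE in vS wS; rewrite /= (negbTE (indS x y vS wS)).
- exact: attach.
- exact: attach.
move: vS wS; rewrite !inE sd_rel_internal => /eqP odd_p /eqP odd_q.
apply/negP => /andP[/eqP epq]; rewrite epq -odd_q in odd_p; lia.
Qed.

Lemma card_lift (S : {set T}) : #|S| + #|slots| <= #|lift S|.
Proof.
rewrite card_set_sum; have -> : #|[set x | inl x \in lift S]| = #|S|.
  by apply: eq_card => x; rewrite !inE.
rewrite leq_add2l; apply: leq_trans (leq_imset_card (slot_of false) _).
apply/subset_leq_card/subsetP => -[s a]; rewrite inE /= => /andP[es am].
set b := [exists y in S, low_end s y].
have ib : 2 * a + b < sd_bound m by have := leq_sd_bound s; lia.
have pP : (s \in edge_set e) && (2 * a + b < 2 * m s) by rewrite es /=; lia.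
apply/imsetP; exists (Sub (s, Ordinal ib) pP : sd_internal e m).
  by rewrite !inE /index_of /edge_of SubK -/b /=; apply/eqP; lia.
apply/eqP; rewrite xpair_eqE /edge_of SubK eqxx /=.
by apply/eqP/ord_inj; rewrite /index_of SubK /= inordK; lia.
Qed.

Section Projection.
Variable S' : {set sd_vertex e m}.
Hypothesis indS' : independent G2 S'.

Let A := [set x | inl x \in S'].
Let I := [set p : sd_internal e m | inr p \in S'].
Let covered := [set s in edge_set e | s \subset A].

Lemma covered_m_gt0 s : s \in covered -> 0 < m s.
Proof.
rewrite inE => /andP[/edge_setP[u [v [-> euv _ _]]] /subsetP sA].
have inS' x : x \in [set u; v] -> inl x \in S' by move=> /sA; rewrite inE.
have /independentP nonadj := indS'.
have := nonadj _ _ (inS' u (set21 u v)) (inS' v (set22 u v)).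
by rewrite /= euv lt0n.
Qed.

Lemma covered_index_inside p :
  inr p \in S' -> edge_of p \in covered -> 0 < index_of p < (2 * m (edge_of p)).-1.
Proof.
rewrite inE => pS /andP[/edge_setP[u [v [es _ lu hv]]] /subsetP sA].
have inS' x : x \in [set u; v] -> inl x \in S' by rewrite -es => /sA; rewrite inE.
have /independentP nonadj := indS'.
have := nonadj _ _ (inS' u (set21 u v)) pS; have := nonadj _ _ (inS' v (set22 u v)) pS.
have [_ ip] := sd_internalP p.
by rewrite /= !sd_attachE lu hv !andbT => /norP[_ ?] /norP[? _]; lia.
Qed.

Lemma slot_of_covered_inj :
  {in I &, injective (fun p => slot_of (edge_of p \in covered) p)}.
Proof.
move=> p q; rewrite !inE => pS qS eq_slot.
have epq : edge_of p = edge_of q := congr1 fst eq_slot.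
have := congr1 (fun w : slot => nat_of_ord w.2) eq_slot; rewrite /= !val_slot_of -epq.
have /independentP nonadj := indS'.
have := nonadj _ _ pS qS; rewrite sd_rel_internal epq eqxx /= => not_consecutive eq_half.
by apply: sd_internal_inj => //; lia.
Qed.

(* On an edge with both ends in S', the internal vertices of S' lie in positions
   1 .. 2 m s - 2, so pairing them as (2a - 1, 2a) leaves slot 0 for the edge itself. *)
Lemma card_internal_covered : #|I| + #|covered| <= #|slots|.
Proof.
pose f p := slot_of (edge_of p \in covered) p.
pose g s : slot := (s, inord 0).
have fI : f @: I \subset slots.
  apply/subsetP => _ /imsetP[p pS ->]; rewrite inE in pS; apply: slot_of_in.
  have [_ ip] := sd_internalP p.
  have [pC|_] := boolP (edge_of p \in covered); last by lia.
  by have := covered_index_inside pS pC; lia.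
have gC : g @: covered \subset slots.
  apply/subsetP => _ /imsetP[s sC ->]; have := covered_m_gt0 sC.
  by move: sC; rewrite !inE /= inordK // => /andP[-> _].
have fIgC : f @: I :&: g @: covered = set0.
  apply/setP => w; rewrite !inE; apply/negP => /andP[/imsetP[p] pI -> /imsetP[s sC]].
  move=> /(congr1 (fun w : slot => (w.1, nat_of_ord w.2))) [eps].
  rewrite inE in pI; rewrite /f val_slot_of eps sC inordK //=.
  by have := covered_index_inside pI; rewrite eps sC => /(_ isT); lia.
rewrite -(card_in_imset slot_of_covered_inj) -(card_in_imset (f := g)); last first.
  by move=> s t _ _ [].
by rewrite -cardsUI fIgC cards0 addn0; apply/subset_leq_card; rewrite subUset fI gC.
Qed.

Lemma project_independent (X : {set T}) : independent e X ->
  exists S, [/\ independent e S, #|S'| <= #|S| + #|slots|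
              & {in X, forall x, inl x \in S' -> x \in S}].
Proof.
move=> /independentP indX.
have notsubX : {in covered, forall s : {set T}, ~~ (s \subset X)}.
  move=> s; rewrite inE => /andP[/edge_setP[u [v [-> euv _ _]]] _].
  apply/negP => /subsetP sX.
  by have := indX u v (sX u (set21 u v)) (sX v (set22 u v)); rewrite euv.
have [R [cardR RX hitR]] := hitting_set_avoiding notsubX.
exists (A :\: R); split.
- apply/independentP => x y /setDP[xA xR] /setDP[yA yR]; apply/negP => exy.
  have sC : [set x; y] \in covered.
    by rewrite inE edge_set2 //=; apply/subsetP => z /set2P[]->.
  by have [z /set2P[]-> zR] := hitR _ sC; [rewrite zR in xR | rewrite zR in yR].
- rewrite card_set_sum -/A -/I.
  have := card_internal_covered; have := cardsD A R.
  have := subset_leq_card (subsetIr A R); lia.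
- move=> x xX xS; rewrite !inE xS andbT.
  by apply/negP => /(subsetP RX); rewrite inE xX.
Qed.

End Projection.

Lemma alpha_sd_rel : alpha G2 = alpha e + #|slots|.
Proof.
apply/eqP; rewrite eqn_leq; apply/andP; split.
  have [S' /andP[indS' /eqP <-]] := max_indep_exists G2.
  have [S [indS leS _]] := project_independent indS' (independent_set0 e).
  by apply: leq_trans leS _; rewrite leq_add2r leq_card_alpha.
have [S /andP[indS /eqP <-]] := max_indep_exists e.
exact: leq_trans (card_lift S) (leq_card_alpha (lift_independent indS)).
Qed.

Lemma max_indep_lift S : max_indep e S -> max_indep G2 (lift S).
Proof.
move=> /andP[indS /eqP cardS]; apply: max_indep_of_alpha_le (lift_independent indS) _.
by rewrite alpha_sd_rel -cardS card_lift.
Qed.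

Lemma lift_internal_endpoint p :
  exists x, forall S, independent e S -> x \in S -> inr p \in lift S.
Proof.
have [ps _] := sd_internalP p.
have [u [v [_ euv lu hv]]] := edge_setP ps.
have [odd_p|even_p] := boolP (odd (index_of p)).
  by exists u => S _ uS; rewrite inE odd_p; apply/eqP/esym/exists_inP; exists u.
exists v => S /independentP indS vS; rewrite inE (negbTE even_p) eq_sym eqbF_neg.
apply/exists_inP => -[y yS /(low_end_inj lu) yu].
by have := indS y v yS vS; rewrite -yu euv.
Qed.

End Subdivision.

Theorem lemma3 (T : finType) (e : rel T) (e_sym : symmetric e) (e_irr : irreflexive e)
  (m : {set T} -> nat) :
  one_extendable e <-> one_extendable (sd_rel e m).
Proof.
split=> [ext [x|p] | ext x].
- have [S [maxS xS]] := ext x.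
  by exists (lift e m S); split; [exact: max_indep_lift | rewrite inE].
- have [x liftP] := lift_internal_endpoint e_sym p.
  have [S [maxS xS]] := ext x.
  exists (lift e m S); split; first exact: max_indep_lift.
  by apply: liftP xS; case/andP: maxS.
have [S' [/andP[indS' /eqP cardS'] xS']] := ext (inl x).
have indx : independent e [set x] by apply/independent_set1; rewrite e_irr.
have [S [indS leS keep_x]] := project_independent e_sym indS' indx.
exists S; split; last by apply: keep_x; rewrite ?inE.
apply: max_indep_of_alpha_le indS _.
by rewrite -(leq_add2r #|slots e m|) -(alpha_sd_rel e_sym) -cardS'.
Qed.
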